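(* There is an infinite set $A_0\subset\mathbb{N}_0$ such that $A_0^2+A_0=\mathbb{N}_0$ and $$\liminf_{X\to\infty}\frac{A_0(X)}{(X\log X)^{1/3}}<\infty.$$
   Context: $\mathbb{N}_0$ is the set of nonnegative integers; $A_0^2=\{ab:a,b\in A_0\}$, $A_0^2+A_0=\{x+y:x\in A_0^2,y\in A_0\}$; $A_0(X)=|A_0\cap[1,X]|$. *)

From Stdlib Require Import Reals.
From mathcomp Require Import ssreflect ssrbool ssrnat seq.

(* A0(X) = |A0 ∩ [1, X]| for a real X. Every integer n with 1 <= n <= X
   satisfies n < up X, so it lies in iota 1 (Z.to_nat (up X)). *)
Definition counting (A : nat -> bool) (X : R) : nat :=
  count (fun n => A n && (if Rle_dec (INR n) X then true else false))
        (iota 1 (Z.to_nat (up X))).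

Definition infinite_set (A : nat -> bool) : Prop :=
  forall m : nat, exists n : nat, (m <= n)%nat /\ A n.

Definition prod_sum_covers (A : nat -> bool) : Prop :=
  forall n : nat, exists a b c : nat, A a /\ A b /\ A c /\ n = (a * b + c)%nat.

(* Let u_j = 2^(e_j) with e_(j+1) = 3 e_j - 1, so that u_(j+1) = u_j^3 / 2, and
   let the block B_j consist of [u_j, 4 u_j) and of the windows
   [2^k, 2^k + 2^k / u_j] for k <= 2 e_j, and A0 = {0} ∪ ⋃_j B_j.
   Every n in [3 u_j, 3 u_(j+1)) is a b + c with a, b, c in B_j: for
   m = n - 2 u_j pick 2^k <= m / u_j < 2^(k+1), then b = m / 2^k lies in
   [u_j, 2 u_j), a = m / b lies in the window at 2^k, and c = 2 u_j + m mod b.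
   At X = u_j^3 / 4 the blocks B_i with i > j contribute only powers of two,
   so A0(X) <= 12 u_j, while (X log X)^(1/3) >= u_j / 2. *)

From Stdlib Require Import Reals Lra ClassicalEpsilon.
From mathcomp Require Import ssreflect ssrbool ssrnat seq.
From mathcomp Require Import eqtype div fintype bigop prime zify.

Fixpoint scale_exp (j : nat) : nat :=
  if j is j'.+1 then (3 * scale_exp j').-1 else 1.

Definition scale (j : nat) : nat := 2 ^ scale_exp j.

Lemma scale_exp_gt0 j : 0 < scale_exp j.
Proof. by elim: j => [|j IH] //=; lia. Qed.

Lemma scale_exp_ltS j : scale_exp j < scale_exp j.+1.
Proof. by have := scale_exp_gt0 j; rewrite /=; lia. Qed.

Lemma scale_exp_leq i j : i <= j -> scale_exp i <= scale_exp j.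
Proof. exact: (homo_leq leqnn leq_trans (fun k => ltnW (scale_exp_ltS k))). Qed.

Lemma scale_exp_gt j : j < scale_exp j.
Proof. by elim: j => [|j IH] //; have := scale_exp_ltS j; lia. Qed.

Lemma scaleS j : 2 * scale j.+1 = scale j ^ 3.
Proof.
rewrite /scale -expnS -expnM /=; congr (2 ^ _).
by have := scale_exp_gt0 j; lia.
Qed.

Lemma scale_ge2 j : 2 <= scale j.
Proof. by rewrite /scale (leq_exp2l 1) ?scale_exp_gt0. Qed.

Lemma scale_exp_lt_scale j : scale_exp j < scale j.
Proof. exact: ltn_expl. Qed.

Definition block (j n : nat) : bool :=
  (scale j <= n < 4 * scale j) ||
  has (fun k => 2 ^ k <= n <= 2 ^ k + 2 ^ k %/ scale j)
      (iota 0 (2 * scale_exp j).+1).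

Definition A0 (n : nat) : bool :=
  if excluded_middle_informative (n = 0 \/ exists j, block j n)
  then true else false.

Lemma A0P n : A0 n <-> n = 0 \/ exists j, block j n.
Proof. by rewrite /A0; case: excluded_middle_informative. Qed.

Lemma block_bound i n : block i n -> n < 4 * 2 ^ (2 * scale_exp i).
Proof.
have le_e_2e : scale_exp i <= 2 * scale_exp i by lia.
case/orP => [/andP[_ lt_n]|/hasP[k]].
  by apply: leq_trans lt_n _; rewrite leq_mul2l leq_exp2l.
rewrite mem_iota => /andP[_ lt_k] /andP[_ le_n].
have le_win : 2 ^ k %/ scale i <= 2 ^ k := leq_div _ _.
have : 2 ^ k <= 2 ^ (2 * scale_exp i) by rewrite leq_exp2l.
lia.
Qed.

Lemma block_lt_scale_pow2 i n : block i n -> n < scale i -> exists k, n = 2 ^ k.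
Proof.
case/orP => [/andP[le_n _]|/hasP[k _ /andP[le_kn le_n]]] lt_n; first lia.
exists k; move: le_n; rewrite divn_small ?addn0; lia.
Qed.

Lemma divn_dyadic_bounds u P m :
  P * u <= m < 2 * P * u -> u <= m %/ P < 2 * u.
Proof.
case: (posnP P) => [->|P_gt0]; first by rewrite !(mul0n, muln0) andbF.
rewrite leq_divRL // ltn_divLR //; lia.
Qed.

Lemma divn_window_bounds u b P m : 0 < u -> u <= b ->
  b * P <= m < b.+1 * P -> P <= m %/ b <= P + P %/ u.
Proof.
move=> u_gt0 le_ub /andP[le_bP lt_m].
have b_gt0 : 0 < b := leq_trans u_gt0 le_ub.
rewrite leq_divRL // mulnC le_bP /= -leq_subLR leq_divRL //.
have le_ab : m %/ b * b <= m := leq_divM m b.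
have : (m %/ b - P) * u <= (m %/ b - P) * b by rewrite leq_mul2l le_ub orbT.
rewrite !mulnBl; lia.
Qed.

Lemma near_pow2_factorization u K m : 0 < u -> u <= m < u * 2 ^ K.+1 ->
  exists k a b r, [/\ k <= K, 2 ^ k <= a <= 2 ^ k + 2 ^ k %/ u,
                      u <= b < 2 * u, r < b & m = a * b + r].
Proof.
move=> u_gt0 /andP[le_um lt_m].
have q_gt0 : 0 < m %/ u by rewrite divn_gt0.
have := trunc_log_bounds (isT : 1 < 2) q_gt0.
set k := trunc_log 2 _; set P := 2 ^ k => /andP[le_Pq lt_q].
have le_kK : k <= K.
  rewrite -ltnS -(ltn_exp2l _ _ (isT : 1 < 2)).
  by apply: leq_ltn_trans le_Pq _; rewrite ltn_divLR // mulnC.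
have P_gt0 : 0 < P by rewrite expn_gt0.
have b_bounds : u <= m %/ P < 2 * u.
  apply: divn_dyadic_bounds; move: le_Pq lt_q.
  by rewrite leq_divRL // ltn_divLR // expnS -/P; lia.
have a_bounds : P <= m %/ (m %/ P) <= P + P %/ u.
  by apply: divn_window_bounds => //; [lia | rewrite leq_divM ltn_ceil].
exists k, (m %/ (m %/ P)), (m %/ P), (m %% (m %/ P)); split => //.
  by rewrite ltn_pmod //; lia.
exact: divn_eq.
Qed.

Lemma block_cover j n : 3 * scale j <= n < 3 * scale j.+1 ->
  exists a b c, [/\ block j a, block j b, block j c & n = a * b + c].
Proof.
move=> /andP[le_n lt_n].
have u_ge2 := scale_ge2 j; have u3 := scaleS j.
have top : scale j * 2 ^ (2 * scale_exp j).+1 = 2 * scale j ^ 3.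
  by rewrite /scale -expnM expnS mulnCA -expnD; congr (2 * 2 ^ _); lia.
have [|k [a [b [r [le_k win_a b_bounds lt_rb eq_m]]]]] :=
  near_pow2_factorization (scale j) (2 * scale_exp j) (n - 2 * scale j) (ltnW u_ge2).
  by rewrite top; lia.
exists a, b, (2 * scale j + r); split; last by lia.
- by apply/orP; right; apply/hasP; exists k; rewrite ?mem_iota.
- by apply/orP; left; lia.
- by apply/orP; left; lia.
Qed.

Lemma exists_bracket (f : nat -> nat) n J :
  f 0 <= n -> n < f J -> exists j, f j <= n < f j.+1.
Proof.
elim: J => [|J IH] le_n lt_n; first lia.
by case: (leqP (f J) n) => [le_fJ|/IH]; [exists J; apply/andP | apply].
Qed.

Lemma block0_small n : 0 < n < 6 -> block 0 n.
Proof. by case: n => [|[|[|[|[|[|[|n]]]]]]]. Qed.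

Lemma A0_prod_sum_covers : prod_sum_covers A0.
Proof.
move=> n; case: (ltnP n 6) => [lt_n6|le_6n].
  exists 0, 0, n; do !split; apply/A0P; case: (posnP n) => [|n_gt0]; try by left.
  by right; exists 0; apply: block0_small; rewrite n_gt0.
have [|j bracket] := exists_bracket (fun j => 3 * scale j) n n le_6n.
  by have := scale_exp_gt n; have := scale_exp_lt_scale n; lia.
have [a [b [c [Ba Bb Bc ->]]]] := block_cover j n bracket.
by exists a, b, c; do !split; apply/A0P; right; exists j.
Qed.

Lemma A0_infinite : infinite_set A0.
Proof.
move=> m; exists (scale m); split.
  by have := scale_exp_gt m; have := scale_exp_lt_scale m; lia.
by apply/A0P; right; exists m; apply/orP; left; have := scale_ge2 m; lia.
Qed.

Lemma count_le_size_cover (T : eqType) (P : pred T) (s S : seq T) :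
  uniq s -> {in s, forall x, P x -> x \in S} -> count P s <= size S.
Proof.
move=> uniq_s sub_S; rewrite -size_filter uniq_leq_size ?filter_uniq // => x.
by rewrite mem_filter => /andP[Px s_x]; exact: sub_S.
Qed.

Lemma sum_pow2_div d K : \sum_(k < K) 2 ^ k %/ d <= 2 ^ K %/ d.
Proof.
case: (posnP d) => [->|d_gt0]; first by rewrite big1 // => k _; rewrite divn0.
elim: K => [|K IH]; first by rewrite big_ord0.
rewrite big_ord_recr /= expnS mul2n -addnn divnD //.
exact: leq_trans (leq_add IH (leqnn _)) (leq_addr _ _).
Qed.

Definition sample (j : nat) : nat := 2 ^ (scale_exp j.+1).-1.

Lemma sample_scale j : 4 * sample j = scale j ^ 3.
Proof.
rewrite -scaleS /scale /sample -[4]/(2 * 2) -mulnA -expnS prednK //.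
exact: scale_exp_gt0.
Qed.

Definition windows (u K : nat) : seq nat :=
  flatten [seq iota (2 ^ k) (2 ^ k %/ u).+1 | k <- iota 0 K].

Lemma size_windows u K : size (windows u K) <= 2 ^ K %/ u + K.
Proof.
rewrite /windows; have -> : iota 0 K = index_iota 0 K by rewrite /index_iota subn0.
rewrite size_flatten /shape -map_comp sumnE big_map big_mkord.
under eq_bigr => k _ do rewrite /= size_iota -addn1.
by rewrite big_split /= sum1_card card_ord leq_add2r sum_pow2_div.
Qed.

Definition sample_cover (j : nat) : seq nat :=
  iota 0 (4 * scale j) ++
  windows (scale j) (2 * scale_exp j).+1 ++
  [seq 2 ^ k | k <- iota 0 (scale_exp j.+1)].

Lemma size_sample_cover j : size (sample_cover j) <= 12 * scale j.
Proof.
have := size_windows (scale j) (2 * scale_exp j).+1.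
have -> : 2 ^ (2 * scale_exp j).+1 = 2 * scale j * scale j.
  by rewrite /scale expnS -mulnA -expnD addnn -mul2n.
rewrite mulnK; last exact: leq_trans (scale_ge2 j).
rewrite /sample_cover !size_cat size_map !size_iota.
have : scale_exp j.+1 <= 3 * scale_exp j := leq_pred _.
by have := scale_exp_lt_scale j; lia.
Qed.

Lemma sample_cover_complete j n : A0 n -> n <= sample j -> n \in sample_cover j.
Proof.
rewrite /sample_cover mem_cat mem_iota add0n mem_cat.
have u_ge2 := scale_ge2 j.
move=> /A0P[-> _|[i Bi] le_n]; first by rewrite /=; lia.
case: (ltngtP i j) => [lt_ij|lt_ji|eq_ij].
- have le_exp : 2 * scale_exp i <= scale_exp j.
    have := scale_exp_leq _ _ lt_ij; have := scale_exp_gt0 i; rewrite /=; lia.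
  have := block_bound _ _ Bi; rewrite -(leq_exp2l _ _ (isT : 1 < 2)) in le_exp.
  by rewrite /scale; lia.
- have lt_sample : sample j < scale i.
    apply: leq_trans (leq_pexp2l _ (scale_exp_leq _ _ lt_ji)) => //.
    by rewrite /sample ltn_exp2l // prednK ?scale_exp_gt0.
  have [k eq_n] := block_lt_scale_pow2 _ _ Bi (leq_ltn_trans le_n lt_sample).
  apply/orP; right; apply/orP; right; rewrite eq_n map_f // mem_iota add0n.
  move: le_n; rewrite eq_n /sample leq_exp2l // => le_k.
  by have := scale_exp_gt0 j.+1; lia.
- move: Bi; rewrite eq_ij => /orP[/andP[_ lt_n]|/hasP[k k_in win]].
    by rewrite lt_n.
  apply/orP; right; apply/orP; left; apply/flatten_mapP; exists k => //.
  by rewrite mem_iota; lia.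
Qed.

Lemma count_A0_le_sample j s :
  uniq s -> count (fun n => A0 n && (n <= sample j)) s <= 12 * scale j.
Proof.
move=> uniq_s; apply: leq_trans (size_sample_cover j).
by apply: count_le_size_cover => // n _ /andP[]; exact: sample_cover_complete.
Qed.

Lemma sample_gt j : j.+1 < sample j.
Proof.
have := scale_exp_gt j.+1; have := ltn_expl (scale_exp j.+1).-1 (isT : 1 < 2).
by rewrite /sample; lia.
Qed.

Lemma counting_INR A N :
  counting A (INR N) = count (fun n => A n && (n <= N)) (iota 1 (Z.to_nat (up (INR N)))).
Proof.
apply: eq_count => n; case: Rle_dec => [/INR_le/leP -> //|not_le].
by case: leP => // /le_INR.
Qed.

Lemma Rpower_third_ge (X U : R) :
  (2 <= X)%R -> (4 * X = U ^ 3)%R -> (U / 2 <= Rpower (X * ln X) (1 / 3))%R.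
Proof.
move=> X_ge2 XU.
have ln_X : (/ 2 <= ln X)%R.
  have := ln_lt_2; case: (Rle_lt_or_eq_dec 2 X X_ge2) => [lt_2X|<-]; last lra.
  by have := ln_increasing 2 X ltac:(lra) lt_2X; lra.
have U_pos : (0 < U)%R.
  by case: (Rle_or_lt U 0) => // U_le0; have := pow_le (- U) 3 ltac:(lra); nra.
have -> : (U / 2 = Rpower ((U / 2) ^ 3) (1 / 3))%R.
  rewrite -Rpower_pow; last lra.
  by rewrite Rpower_mult (_ : (INR 3 * (1 / 3) = 1)%R) ?Rpower_1 //=; [lra | field].
apply: Rle_Rpower_l; first lra.
split; first by apply: pow_lt; lra.
have -> : ((U / 2) ^ 3 = X / 2)%R by rewrite -(Rmult_1_l (_ ^ 3)); field_simplify; lra.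
nra.
Qed.

Theorem corollary3p3 :
  exists A0 : nat -> bool,
    infinite_set A0 /\ prod_sum_covers A0 /\
    exists C : R, forall M : R, exists X : R,
      (M < X)%R /\ (1 < X)%R /\
      (INR (counting A0 X) / Rpower (X * ln X) (1 / 3) <= C)%R.
Proof.
exists A0; split; first exact: A0_infinite.
split; first exact: A0_prod_sum_covers.
exists 24%R => M; have [j lt_Mj] := INR_unbounded M.
have gt_sample := sample_gt j.
have sample_ge2 : (2 <= INR (sample j))%R.
  by rewrite -[2%R]/(INR 2); apply: le_INR; apply/leP; lia.
exists (INR (sample j)); split; [|split; first lra].
  by apply: Rlt_trans lt_Mj _; apply: lt_INR; apply/ltP; lia.
have cnt : (INR (counting A0 (INR (sample j))) <= 12 * INR (scale j))%R.
  rewrite counting_INR (_ : 12%R = INR 12); last by rewrite INR_IZR_INZ.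
  rewrite -mult_INR.
  by apply: le_INR; apply/leP/count_A0_le_sample/iota_uniq.
have cube : (4 * INR (sample j) = INR (scale j) ^ 3)%R.
  have := f_equal INR (sample_scale j).
  rewrite !expnS expn0 muln1 !mult_INR (_ : INR 4 = 4%R) => [->|]; first ring.
  by rewrite INR_IZR_INZ.
have u_pos : (0 < INR (scale j))%R.
  by apply: lt_0_INR; apply/ltP; have := scale_ge2 j; lia.
have := Rpower_third_ge _ _ sample_ge2 cube.
set root := Rpower _ _ => root_ge.
apply: (Rmult_le_reg_r root); first lra.
by rewrite /Rdiv Rmult_assoc Rinv_l; lra.
Qed.
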